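(* Let $G\cong K_s\,\square\,K_2$ with $s\ge3$. Then $q(G)=2$, and $G$ has a matrix realization $A\in S(G)$ with exactly two distinct eigenvalues that has the Strong Spectral Property.
   Context: $K_s\square K_2$ is the Cartesian product: vertex set $V(K_s)\times V(K_2)$, with $(g_1,h_1)\sim(g_2,h_2)$ iff ($g_1=g_2$ and $h_1h_2$ an edge) or ($g_1g_2$ an edge and $h_1=h_2$). For a graph $G$ on $n$ vertices, $S(G)$ is the set of real symmetric $n\times n$ matrices $A$ with $a_{ij}\ne0$ ($i\ne j$) iff $ij\in E(G)$ (diagonal unrestricted), and $q(G)$ is the minimum number of distinct eigenvalues of a matrix in $S(G)$. A symmetric matrix $A$ has the Strong Spectral Property (SSP) if the only symmetric matrix $X$ with $A\circ X=O$, $I\circ X=O$ and $AX-XA=O$ is $X=O$ ($\circ$ the entrywise product). *)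

From HB Require Import structures.
From mathcomp Require Import all_boot all_order all_algebra.
From mathcomp Require Import reals.
Set Implicit Arguments. Unset Strict Implicit. Unset Printing Implicit Defensive.
Import Order.TTheory GRing.Theory Num.Theory.
Local Open Scope ring_scope.

(** Simple graphs: a symmetric irreflexive relation on a finite vertex type. *)

Definition complete_graph (n : nat) : rel 'I_n := fun i j => i != j.

Definition cart_prod (T1 T2 : finType) (e1 : rel T1) (e2 : rel T2) : rel (T1 * T2) :=
  fun u v => ((u.1 == v.1) && e2 u.2 v.2) || (e1 u.1 v.1 && (u.2 == v.2)).

Definition KsK2 (s : nat) : rel ('I_s * 'I_2) :=
  cart_prod (@complete_graph s) (@complete_graph 2).

(** Matrices indexed by a vertex type T are matrices of size #|T|, the
    vertices being labelled through the canonical enumeration of T. *)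

Definition in_S (R : realType) (T : finType) (e : rel T) (A : 'M[R]_#|T|) : Prop :=
  A^T = A /\
  forall i j : 'I_#|T|, i != j -> (A i j != 0) = e (enum_val i) (enum_val j).

Definition num_distinct_eig (R : realType) (n : nat) (A : 'M[R]_n) (k : nat) : Prop :=
  exists sp : seq R, [/\ uniq sp, size sp = k & forall a : R, eigenvalue A a = (a \in sp)].

Definition q_eq (R : realType) (T : finType) (e : rel T) (k : nat) : Prop :=
  (exists A : 'M[R]_#|T|, in_S e A /\ num_distinct_eig A k) /\
  (forall (A : 'M[R]_#|T|) (m : nat), in_S e A -> num_distinct_eig A m -> (k <= m)%N).

Definition hadamard (R : realType) (n : nat) (A X : 'M[R]_n) : 'M[R]_n :=
  \matrix_(i, j) (A i j * X i j).

Definition SSP (R : realType) (n : nat) (A : 'M[R]_n) : Prop :=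
  forall X : 'M[R]_n, X^T = X ->
    hadamard A X = 0 -> hadamard 1%:M X = 0 -> A *m X - X *m A = 0 -> X = 0.

From HB Require Import structures.
From mathcomp Require Import all_boot all_order all_algebra.
From mathcomp Require Import reals complex ring lra.
Import Order.TTheory GRing.Theory Num.Theory.
Local Open Scope ring_scope.
Set Implicit Arguments. Unset Strict Implicit. Unset Printing Implicit Defensive.

(* Label the vertices of K_s □ K_2 by (a, h) with a : 'I_s, h : 'I_2, and let J be the
   all-ones s x s matrix.  The block matrix A = [[P, Q], [Q, -P]] with P = 3s I - 6 J and
   Q = 4s I has the pattern of K_s □ K_2.  P is 3s times the reflection I - (2/s) J, so
   P^2 = (3s)^2 I, and since Q is scalar A^2 = ((3s)^2 + (4s)^2) I = (5s)^2 I: the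
   eigenvalues of A are exactly 5s and -5s.
   SSP: a symmetric X vanishing on the diagonal and on the edges is [[0, Y], [Y^T, 0]] with
   Y zero on its diagonal; AX = XA forces Y^T = Y and PY = -YP, i.e. s Y_ab = r_a + r_b for
   the row sums r of Y.  The diagonal gives r = 0, hence Y = 0.
   q >= 2: a real symmetric matrix with a single eigenvalue is scalar (spectral theorem for
   its complexification), so it cannot have the nonzero off-diagonal entry of an edge. *)

Section VertexMatrix.
Variables (R : pzRingType) (T : finType).

Definition vmx (f : T -> T -> R) : 'M[R]_#|T| :=
  \matrix_(i, j) f (enum_val i) (enum_val j).

Lemma vmxE f x y : vmx f (enum_rank x) (enum_rank y) = f x y.
Proof. by rewrite mxE !enum_rankK. Qed.

Lemma vmx_entries (M : 'M[R]_#|T|) :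
  M = vmx (fun x y => M (enum_rank x) (enum_rank y)).
Proof. by apply/matrixP => i j; rewrite mxE !enum_valK. Qed.

Lemma vmx_eq0 f : vmx f = 0 <-> forall x y, f x y = 0.
Proof.
split=> [f0 x y | f0]; first by rewrite -vmxE f0 mxE.
by apply/matrixP => i j; rewrite !mxE f0.
Qed.

Lemma trmx_vmx f : (vmx f)^T = vmx (fun x y => f y x).
Proof. by apply/matrixP => i j; rewrite !mxE. Qed.

Lemma vmxB f g : vmx f - vmx g = vmx (fun x y => f x y - g x y).
Proof. by apply/matrixP => i j; rewrite !mxE. Qed.

Lemma vmx_scalar (c : R) : vmx (fun x y => c *+ (x == y)) = c%:M.
Proof. by apply/matrixP => i j; rewrite !mxE (inj_eq enum_val_inj). Qed.

Lemma mul_vmx f g :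
  vmx f *m vmx g = vmx (fun x y => \sum_z f x z * g z y).
Proof.
apply/matrixP => i j; rewrite !mxE (reindex _ (onW_bij _ (@enum_rank_bij T))).
by apply: eq_bigr => z _; rewrite !mxE enum_rankK.
Qed.

End VertexMatrix.

Section Blocks.
Variables (R : pzRingType) (s : nat) (T : finType).

Definition blk_ker (B : T -> T -> 'M[R]_s) (x y : 'I_s * T) : R := B x.2 y.2 x.1 y.1.

Lemma sum_blk_ker B C x y :
  \sum_z blk_ker B x z * blk_ker C z y = (\sum_l B x.2 l *m C l y.2) x.1 y.1.
Proof.
pose F k l := blk_ker B x (k, l) * blk_ker C (k, l) y.
rewrite summxE -(pair_big xpredT xpredT F) exchange_big /=.
by apply: eq_bigr => l _; rewrite mxE.
Qed.

End Blocks.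

Lemma ord2_cases (h : 'I_2) : h = ord0 \/ h = ord_max.
Proof. by case: h => [[|[|//]]] ?; [left | right]; apply: val_inj. Qed.

Lemma ord0_neq_max : (ord0 == ord_max :> 'I_2) = false. Proof. by []. Qed.
Lemma ord_max_neq0 : (ord_max == ord0 :> 'I_2) = false. Proof. by []. Qed.

Lemma sum_ord2 (V : nmodType) (F : 'I_2 -> V) : \sum_l F l = F ord0 + F ord_max.
Proof. by rewrite big_ord_recl big_ord1; congr (_ + F _); apply: val_inj. Qed.

Lemma eigenvalue_map_complex (R : realType) n (A : 'M[R]_n) (a : R) :
  eigenvalue (map_mx (real_complex R) A) (a%:C)%C = eigenvalue A a.
Proof. by rewrite !eigenvalue_root_char -map_char_poly fmorph_root. Qed.

Section RealSymmetric.
Variables (R : realType) (n : nat) (A : 'M[R]_n).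
Hypothesis symA : A^T = A.

Let Ac := map_mx (real_complex R) A.

Let Ac_herm : Ac \is hermsymmx.
Proof.
apply: realsym_hermsym.
  by apply/is_hermitianmxP; rewrite expr0 scale1r map_mx_id // /Ac map_trmx symA.
by apply/mxOverP => i j; rewrite mxE; apply/complex_realP; eexists.
Qed.

Let Ac_spectral : Ac = invmx (spectralmx Ac) *m diag_mx (spectral_diag Ac) *m spectralmx Ac.
Proof. exact/orthomx_spectralP/hermitian_normalmx. Qed.

Lemma spectral_diag_realsym i :
  exists2 r, spectral_diag Ac 0 i = (r%:C)%C & eigenvalue A r.
Proof.
have /complex_realP [r dr] : spectral_diag Ac 0 i \is Num.real.
  exact: mxOverP (hermitian_spectral_diag_real Ac_herm) _ _.
have E := Ac_spectral; set P := spectralmx Ac in E *; set d := spectral_diag Ac in E dr *.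
exists r => //; rewrite -eigenvalue_map_complex -dr -/Ac.
apply/eigenvalueP; exists (delta_mx 0 i *m P).
  rewrite E !mulmxA mulmxK ?spectral_unit // scalemxAl.
  congr (_ *m _); rewrite mul_mx_diag; apply/matrixP => k l; rewrite !mxE.
  by have [->|_] := eqVneq l i; rewrite ?andbT ?andbF ?mul0r ?mulr0 // mulrC.
rewrite mulmx_free_eq0 ?row_free_unit ?spectral_unit //.
by apply/eqP => /matrixP/(_ 0 i); rewrite !mxE !eqxx => /eqP; rewrite oner_eq0.
Qed.

Lemma realsym_eigenvalue_exists : (0 < n)%N -> exists a, eigenvalue A a.
Proof.
by move=> n_gt0; have [a _] := spectral_diag_realsym (Ordinal n_gt0); exists a.
Qed.

Lemma realsym_eigenvalue_scalar a : (forall b, eigenvalue A b -> b = a) -> A = a%:M.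
Proof.
move=> eigA; apply: (@map_mx_inj _ _ (real_complex R)).
suff E : Ac = (a%:C)%C%:M by rewrite map_scalar_mx -E.
rewrite Ac_spectral.
have -> : diag_mx (spectral_diag Ac) = (a%:C)%C%:M.
  apply/matrixP => i j; rewrite !mxE; have [->|] := eqVneq i j; last by rewrite !mulr0n.
  by have [r -> /eigA ->] := spectral_diag_realsym j.
by rewrite mul_mx_scalar -scalemxAl mulVmx ?spectral_unit // scalemx1.
Qed.

End RealSymmetric.

Section SquareScalar.
Variables (F : fieldType) (n : nat) (A : 'M[F]_n) (c : F).
Hypothesis sqrA : A *m A = (c ^+ 2)%:M.

Lemma eigenvalue_sqr_scalar a : eigenvalue A a -> a ^+ 2 = c ^+ 2.
Proof.
move=> /eigenvalueP [v vA v_neq0]; apply/eqP; rewrite -subr_eq0.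
have : (a ^+ 2 - c ^+ 2) *: v = 0.
  rewrite scalerBl -[c ^+ 2 *: v]mul_mx_scalar -sqrA mulmxA vA -scalemxAl vA.
  by rewrite scalerA -expr2 subrr.
by move/eqP; rewrite scaler_eq0 (negbTE v_neq0) orbF.
Qed.

(* [(A + c) A = c (A + c)]: every nonzero row of [A + c] is a [c]-eigenvector. *)
Lemma eigenvalue_sqr_scalar_root (i j : 'I_n) : i != j -> A i j != 0 -> eigenvalue A c.
Proof.
move=> ij Aij; apply/eigenvalueP; exists (row i (A + c%:M)).
  rewrite -row_mul mulmxDl sqrA mul_scalar_mx; apply/rowP => k.
  by rewrite !mxE mulrDr mulrnAr -expr2 addrC.
by apply/eqP => /rowP/(_ j); rewrite !mxE (negbTE ij) mulr0n addr0; apply/eqP.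
Qed.

End SquareScalar.

Lemma num_distinct_eig_sqr_scalar (R : realType) n (A : 'M[R]_n) (c : R) (i j : 'I_n) :
  c != 0 -> A *m A = (c ^+ 2)%:M -> i != j -> A i j != 0 -> num_distinct_eig A 2.
Proof.
move=> c_neq0 sqrA ij Aij; exists [:: c; - c]; split => //.
  by rewrite /= andbT inE eq_sym eqNr.
move=> a; apply/idP/idP => [/(eigenvalue_sqr_scalar sqrA)/eqP|].
  by rewrite eqf_sqr !inE.
rewrite !inE => /orP [] /eqP ->; first exact: (eigenvalue_sqr_scalar_root sqrA ij Aij).
by apply: eigenvalue_sqr_scalar_root ij Aij; rewrite sqrrN.
Qed.

Section GraphMatrix.
Variables (R : realType) (T : finType) (e : rel T).

Lemma in_S_vmx (f : T -> T -> R) :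
  (forall x y, f x y = f y x) -> (forall x y, x != y -> (f x y != 0) = e x y) ->
  in_S e (vmx f).
Proof.
move=> f_sym f_supp; split; first by apply/matrixP => i j; rewrite !mxE f_sym.
by move=> i j ij; rewrite mxE f_supp // (inj_eq enum_val_inj).
Qed.

Lemma SSP_vmx (f : T -> T -> R) :
  (forall g : T -> T -> R,
     (forall x y, g x y = g y x) -> (forall x, g x x = 0) ->
     (forall x y, f x y != 0 -> g x y = 0) ->
     (forall x y, \sum_z f x z * g z y = \sum_z g x z * f z y) ->
   forall x y, g x y = 0) ->
  SSP (vmx f).
Proof.
move=> f_SSP X; rewrite [X]vmx_entries.
set g := fun x y => X (enum_rank x) (enum_rank y).
rewrite trmx_vmx mul_vmx mul_vmx vmxB -(vmx_scalar T 1) => g_sym fg0 g_diag comm.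
apply/vmx_eq0; apply: f_SSP.
- by move=> x y; rewrite -vmxE -g_sym vmxE.
- move=> x; move/matrixP: g_diag => /(_ (enum_rank x) (enum_rank x)).
  by rewrite !mxE !enum_rankK eqxx mul1r.
- move=> x y f_neq0; move/matrixP: fg0 => /(_ (enum_rank x) (enum_rank y)).
  by rewrite !mxE !enum_rankK => /eqP; rewrite mulf_eq0 (negbTE f_neq0) => /eqP.
- by move=> x y; apply/eqP; rewrite -subr_eq0; apply/eqP; move/vmx_eq0: comm; apply.
Qed.

Lemma num_distinct_eig_ge2 (A : 'M[R]_#|T|) m x y :
  x != y -> e x y -> in_S e A -> num_distinct_eig A m -> (2 <= m)%N.
Proof.
move=> xy exy [symA A_supp] [sp [_ size_sp eigA]]; rewrite leqNgt; apply/negP => m_lt2.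
have n_gt0 : (0 < #|T|)%N by apply/card_gt0P; exists x.
have [a eig_a] := realsym_eigenvalue_exists symA n_gt0.
have Aa : A = a%:M.
  apply: (realsym_eigenvalue_scalar symA) => b; rewrite eigA.
  move: m_lt2 eig_a; rewrite eigA -size_sp; case: sp {eigA size_sp} => [|c [|//]] //=.
  by rewrite !inE => _ /eqP -> /eqP ->.
have ij : enum_rank x != enum_rank y by rewrite (inj_eq enum_rank_inj).
by have := A_supp _ _ ij; rewrite !enum_rankK exy Aa mxE (negbTE ij) mulr0n eqxx.
Qed.

End GraphMatrix.

Section KsK2Realization.
Variables (R : realType) (s : nat).
Hypothesis s_gt0 : (0 < s)%N.

Local Notation J := (const_mx 1 : 'M[R]_s).

Let s_neq0 : s%:R != 0 :> R.
Proof. by rewrite pnatr_eq0 eqn0Ngt s_gt0. Qed.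

Let four_s_neq0 : 4 * s%:R != 0 :> R.
Proof. by rewrite mulf_neq0 // pnatr_eq0. Qed.

Lemma ones_mx_sqr : J *m J = s%:R *: J.
Proof.
apply/matrixP => a b; rewrite !mxE.
by under eq_bigr do rewrite !mxE mulr1; rewrite sumr_const card_ord mulr1.
Qed.

Definition refl_mx : 'M[R]_s := (3 * s%:R)%:M - 6 *: J.

Lemma refl_mxE a b : refl_mx a b = 3 * s%:R *+ (a == b) - 6.
Proof. by rewrite !mxE mulr1. Qed.

Lemma refl_mx_sqr : refl_mx *m refl_mx = ((3 * s%:R) ^+ 2)%:M.
Proof.
rewrite mulmxBl !mulmxBr !mul_scalar_mx !mul_mx_scalar -scalemxAl -scalemxAr ones_mx_sqr.
apply/matrixP => a b; rewrite !mxE.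
by case: (a == b); rewrite ?mulr0n ?mulr1n; ring.
Qed.

Lemma refl_mx_anticomm_eq0 (Y : 'M[R]_s) :
  Y^T = Y -> (forall a, Y a a = 0) -> refl_mx *m Y = - (Y *m refl_mx) -> Y = 0.
Proof.
move=> Y_sym Y_diag anti; pose rsum a := \sum_k Y a k.
have entry a b : s%:R * Y a b = rsum a + rsum b.
  move/matrixP: anti => /(_ a b); rewrite /refl_mx mulmxBl mulmxBr mul_scalar_mx.
  rewrite mul_mx_scalar -scalemxAl -scalemxAr !mxE.
  have -> : \sum_k J a k * Y k b = rsum b.
    by apply: eq_bigr => k _; rewrite mxE mul1r -[in LHS]Y_sym mxE.
  have -> : \sum_k Y a k * J k b = rsum a by apply: eq_bigr => k _; rewrite mxE mulr1.
  lra.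
have rsum0 a : rsum a = 0 by have := entry a a; rewrite Y_diag mulr0; lra.
apply/matrixP => a b; have := entry a b; rewrite !rsum0 addr0 mxE => /eqP.
by rewrite mulf_eq0 (negbTE s_neq0) => /eqP.
Qed.

Definition KsK2_blocks (h l : 'I_2) : 'M[R]_s :=
  if h == l then (-1) ^+ h *: refl_mx else (4 * s%:R)%:M.

Lemma KsK2_blocks_sqr h h' :
  \sum_l KsK2_blocks h l *m KsK2_blocks l h' = ((5 * s%:R) ^+ 2 *+ (h == h'))%:M.
Proof.
rewrite sum_ord2 /KsK2_blocks.
case: (ord2_cases h) => ->; case: (ord2_cases h') => ->;
  rewrite ?eqxx ?ord0_neq_max ?ord_max_neq0 /= ?expr0 ?expr1 ?scale1r ?scaleN1r;
  rewrite ?mulNmx ?mulmxN ?opprK ?refl_mx_sqr ?mul_mx_scalar ?mul_scalar_mx;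
  by apply/matrixP => a b; rewrite !mxE; ring.
Qed.

Lemma KsK2_blocksE h l a b :
  KsK2_blocks h l a b =
  if h == l then (-1) ^+ h * (3 * s%:R *+ (a == b) - 6) else 4 * s%:R *+ (a == b).
Proof. by rewrite /KsK2_blocks; case: (h == l); rewrite mxE ?refl_mxE. Qed.

Definition KsK2_mx : 'M[R]_#|{: 'I_s * 'I_2}| := vmx (blk_ker KsK2_blocks).

Lemma KsK2_mx_sqr : KsK2_mx *m KsK2_mx = ((5 * s%:R) ^+ 2)%:M.
Proof.
rewrite mul_vmx -vmx_scalar; apply/matrixP => i j; rewrite !mxE sum_blk_ker.
rewrite KsK2_blocks_sqr mxE -mulrnA.
by case: (enum_val i) (enum_val j) => a h [b l]; rewrite xpair_eqE /= mulnb andbC.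
Qed.

Lemma KsK2_mx_in_S : in_S (@KsK2 s) KsK2_mx.
Proof.
apply: in_S_vmx => [[a h] [b l] | [a h] [b l]]; rewrite /blk_ker !KsK2_blocksE /=.
  by rewrite eq_sym [b == a]eq_sym; case: eqP => [->|].
rewrite xpair_eqE /KsK2 /cart_prod /complete_graph /=.
have [->|hl] /= := eqVneq h l; rewrite ?eqxx /= ?andbT ?andbF ?orbF.
  by move=> ab; rewrite (negbTE ab) sub0r /= mulf_neq0 ?signr_eq0 ?oppr_eq0 ?pnatr_eq0.
by case: (a == b); rewrite ?mulr0n ?mulr1n ?eqxx.
Qed.

Lemma KsK2_mx_SSP : SSP KsK2_mx.
Proof.
apply: SSP_vmx => g g_sym g_diag g_supp comm.
pose G h l : 'M[R]_s := \matrix_(a, b) g (a, h) (b, l).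
have gE x y : g x y = blk_ker G x y by case: x y => a h [b l]; rewrite /blk_ker mxE.
have G_comm h l : \sum_k KsK2_blocks h k *m G k l = \sum_k G h k *m KsK2_blocks k l.
  apply/matrixP => a b; have := comm (a, h) (b, l).
  under eq_bigr do rewrite gE; under [in RHS]eq_bigr do rewrite gE.
  by rewrite !sum_blk_ker.
have G_diag h : G h h = 0.
  apply/matrixP => a b; rewrite !mxE; have [<-|ab] := eqVneq a b; first exact: g_diag.
  apply: g_supp; rewrite /blk_ker KsK2_blocksE /= eqxx (negbTE ab) sub0r.
  by rewrite mulf_neq0 ?signr_eq0 ?oppr_eq0 ?pnatr_eq0.
have G_tr : G ord_max ord0 = (G ord0 ord_max)^T.
  by apply/matrixP => a b; rewrite !mxE g_sym.
have G_cross_diag a : G ord0 ord_max a a = 0.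
  by rewrite mxE; apply: g_supp; rewrite /blk_ker KsK2_blocksE /= eqxx mulr1n.
have G_cross_sym : (G ord0 ord_max)^T = G ord0 ord_max.
  have := G_comm ord0 ord0; rewrite !sum_ord2 !G_diag G_tr /KsK2_blocks eqxx.
  rewrite ord0_neq_max ord_max_neq0 mulmx0 mul0mx !add0r mul_scalar_mx mul_mx_scalar.
  exact: scalerI.
have G_cross_anticomm : refl_mx *m G ord0 ord_max = - (G ord0 ord_max *m refl_mx).
  have := G_comm ord0 ord_max; rewrite !sum_ord2 !G_diag /KsK2_blocks !eqxx.
  rewrite ord0_neq_max mulmx0 mul0mx addr0 add0r /= expr0 expr1 scale1r.
  by rewrite scaleN1r mulmxN.
have G_cross0 := refl_mx_anticomm_eq0 G_cross_sym G_cross_diag G_cross_anticomm.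
move=> x y; rewrite gE; case: x y => a h [b l]; rewrite /blk_ker /=.
by case: (ord2_cases h) => ->; case: (ord2_cases l) => ->; rewrite ?G_diag ?G_tr ?G_cross0 ?trmx0 mxE.
Qed.

Lemma KsK2_mx_num_distinct_eig : num_distinct_eig KsK2_mx 2.
Proof.
pose a := Ordinal s_gt0.
have x01 : enum_rank ((a, ord0) : 'I_s * 'I_2) != enum_rank (a, ord_max).
  by rewrite (inj_eq enum_rank_inj) xpair_eqE ord0_neq_max andbF.
apply: (num_distinct_eig_sqr_scalar _ KsK2_mx_sqr x01).
  by rewrite mulf_neq0 // pnatr_eq0.
by rewrite vmxE /blk_ker KsK2_blocksE /= mulr1n.
Qed.

End KsK2Realization.

Unset Implicit Arguments. Set Strict Implicit. Set Printing Implicit Defensive.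

Theorem mainTheorem15 (R : realType) (s : nat) :
  (3 <= s)%N ->
  q_eq R (@KsK2 s) 2 /\
  exists A : 'M[R]_#|{: 'I_s * 'I_2}|,
    [/\ in_S (@KsK2 s) A, num_distinct_eig A 2 & SSP A].
Proof.
(* The realization works for every [s >= 1]; [3 <= s] is only used as [0 < s]. *)
move=> s_ge3; have s_gt0 : (0 < s)%N by apply: leq_trans s_ge3.
have inS := KsK2_mx_in_S R s_gt0; have eig2 := KsK2_mx_num_distinct_eig R s_gt0.
split; last by exists (KsK2_mx R s); split; last exact: KsK2_mx_SSP.
split; first by exists (KsK2_mx R s).
move=> A m A_inS A_eig; pose a := Ordinal s_gt0.
apply: (num_distinct_eig_ge2 (x := (a, ord0)) (y := (a, ord_max)) _ _ A_inS A_eig).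
  by rewrite xpair_eqE ord0_neq_max andbF.
by rewrite /KsK2 /cart_prod /complete_graph eqxx ord0_neq_max.
Qed.
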